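(* For any myopic equilibrium $\mathbf{s}$ of a $k$-round Funding Game with bundle sizes $m^1,\dots,m^k$, we have for each $t\in\{1,\dots,k\}$: $$\Delta^t \;\ge\; \frac{sw(\mathbf{s}^t)}{m^t} \;\ge\; \Delta^{t+1}.$$
   Context: Players $1,\dots,n$ have valuation functions $v_i:\{0,\dots,m\}\to\mathbb{R}_{\ge0}$ with $v_i(0)=0$, nondecreasing, with diminishing marginal returns $v_i(x)-v_i(x-1)\ge v_i(x+1)-v_i(x)$. A (single-round) Funding Game with $M$ items and such valuations $w_i$: each player submits a request $(x_i,\tilde v_i)$ with $x_i\in\{0,\dots,M\}$ and $0\le \tilde v_i\le w_i(x_i)$; the Highest Ratio Greedy mechanism considers requests in descending order of $\tilde v_i/x_i$ (ties in favor of lower index) and grants each in turn $\min(x_i,\text{items still available})$ items; payoff is $w_i$ of the number of items received; a Nash equilibrium is a request profile where no player can increase its payoff by changing its own valid request. A $k$-round Funding Game with bundle sizes $m^1,\dots,m^k$ (positive integers, $\sum_t m^t=m$) consists of rounds $t=1,\dots,k$; in round $t$ a single-round Funding Game $G^t$ is played with $m^t$ items and marginal valuations $v_i^t(x)=v_i(x+\alpha_i^{t-1})-v_i(\alpha_i^{t-1})$, where $X_i^t$ is the number of items player $i$ receives in round $t$ and $\alpha_i^t=\sum_{j\le t}X_i^j$, $\alpha_i^0=0$. $\mathbf{s}^t$ is the request profile in round $t$ and $\mathbf{s}=(\mathbf{s}^1,\dots,\mathbf{s}^k)$. $\mathbf{s}$ is a myopic equilibrium if each $\mathbf{s}^t$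 is a Nash equilibrium of $G^t$. $sw(\mathbf{s}^t)=\sum_i v_i^t(X_i^t)$, $sw(\mathbf{s})=\sum_i v_i(\alpha_i^k)$, and $\Delta^t=\max_i v_i^t(1)$ for $t=1,\dots,k+1$ (with $v_i^{k+1}(x)=v_i(x+\alpha_i^k)-v_i(\alpha_i^k)$). *)

From HB Require Import structures.
From mathcomp Require Import all_boot all_order all_algebra.
Set Implicit Arguments. Unset Strict Implicit. Unset Printing Implicit Defensive.
Import Order.TTheory GRing.Theory Num.Theory.
Local Open Scope ring_scope.

Section FundingGame.
Variable R : realFieldType.
Variable n : nat.

(* A request (x, v~) : number of items requested and claimed value. *)
Definition request := (nat * R)%type.
Definition profile := 'I_n -> request.

(* ratio v~/x  (for x = 0 this is 0 by MathComp's convention 0^-1 = 0;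
   such requests are granted 0 items anyway). *)
Definition ratio (r : request) : R := r.2 / (r.1)%:R.

Definition prec (s : profile) (i j : 'I_n) : bool :=
  (ratio (s j) < ratio (s i)) || ((ratio (s i) == ratio (s j)) && (i <= j)%N).

Definition hrg_order (s : profile) : seq 'I_n := sort (prec s) (enum 'I_n).

Fixpoint grant (avail : nat) (l : seq 'I_n) (x : 'I_n -> nat) : 'I_n -> nat :=
  match l with
  | [::] => fun _ => 0%N
  | i :: l' => let g := minn (x i) avail in
               fun j => if j == i then g else grant (avail - g) l' x j
  end.

Definition alloc (M : nat) (s : profile) : 'I_n -> nat :=
  grant M (hrg_order s) (fun i => (s i).1).

Definition valid_req (M : nat) (w : nat -> R) (r : request) : bool :=
  [&& (r.1 <= M)%N, 0 <= r.2 & r.2 <= w r.1].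

Definition upd (s : profile) (i : 'I_n) (r : request) : profile :=
  fun j => if j == i then r else s j.

Definition nash (M : nat) (w : 'I_n -> nat -> R) (s : profile) : Prop :=
  (forall i, valid_req M (w i) (s i)) /\
  (forall i (r : request), valid_req M (w i) r ->
     w i (alloc M (upd s i r) i) <= w i (alloc M s i)).

(* k-round game: rounds t = 1..k, bundle sizes mb t, profiles s t. *)
Fixpoint alpha (mb : nat -> nat) (s : nat -> profile) (t : nat) : 'I_n -> nat :=
  match t with
  | 0 => fun _ => 0%N
  | t'.+1 => fun i => (alpha mb s t' i + alloc (mb t) (s t) i)%N
  end.

Definition vt (v : 'I_n -> nat -> R) (mb : nat -> nat) (s : nat -> profile)
  (t : nat) (i : 'I_n) (x : nat) : R :=
  v i (x + alpha mb s t.-1 i)%N - v i (alpha mb s t.-1 i).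

Definition myopic_eq (v : 'I_n -> nat -> R) (k : nat) (mb : nat -> nat)
  (s : nat -> profile) : Prop :=
  forall t, (1 <= t <= k)%N -> nash (mb t) (vt v mb s t) (s t).

Definition sw_round (v : 'I_n -> nat -> R) (mb : nat -> nat) (s : nat -> profile)
  (t : nat) : R :=
  \sum_(i < n) vt v mb s t i (alloc (mb t) (s t) i).

(* Delta^t = max_i v_i^t(1)  (values are >= 0, so 0 is a neutral start) *)
Definition Delta (v : 'I_n -> nat -> R) (mb : nat -> nat) (s : nat -> profile)
  (t : nat) : R :=
  \big[Num.max/0]_(i < n) vt v mb s t i 1%N.

End FundingGame.

From Pilot Require Import Defs.
From HB Require Import structures.
From mathcomp Require Import all_boot all_order all_algebra.
From mathcomp Require Import zify lra.
Import Order.TTheory GRing.Theory Num.Theory.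
Set Implicit Arguments. Unset Strict Implicit.

(* Fix a round t with M = m^t items and marginal valuations w_i = v_i^t, which
   are again zero at 0, nondecreasing and concave.  The claim splits in two:

   - Upper bound sw(s^t) <= M * Delta^t: by concavity w_i(x) <= x * w_i(1), and
     the mechanism hands out at most M items in total.
   - Lower bound M * (w_i(X_i+1) - w_i(X_i)) <= sw(s^t) for every player i,
     where X is the HRG allocation; since v_i^(t+1)(1) is exactly this marginal
     value, taking the maximum over i gives Delta^(t+1) <= sw(s^t)/M.  If the
     marginal d is positive, the Nash condition forces (a) all M items to be
     allocated and (b) every other winner j to have ratio >= w_i(X_i+1)/(X_i+1),
     for otherwise i could request X_i+1 items and get them.  Concavity then
     gives X_j * d <= w_j(X_j) for every j, and summing yields M * d <= sw. *)

Lemma sum_subpred_le (I : finType) (P Q : pred I) (f : I -> nat) :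
  (forall i, P i -> Q i) -> (\sum_(i | P i) f i <= \sum_(i | Q i) f i)%N.
Proof.
move=> PQ; rewrite [leqLHS]big_mkcond [leqRHS]big_mkcond leq_sum // => i _.
by case: ifP => // /PQ ->.
Qed.

Section GreedyGrant.
Variable n : nat.
Implicit Types (l : seq 'I_n) (x : 'I_n -> nat).

Lemma grant_prefix_sum avail l x p : uniq l ->
  (\sum_(k <- take p l) grant avail l x k = minn avail (\sum_(k <- take p l) x k))%N.
Proof.
elim: l avail p => [|a l IH] avail p /=; first by rewrite !big_nil; lia.
move=> /andP[a_notin_l uniq_l]; case: p => [|p] /=; first by rewrite !big_nil; lia.
rewrite !big_cons eqxx.
rewrite (@eq_big_seq _ _ _ _ _ _ (grant (avail - minn (x a) avail) l x)); last first.
  move=> k k_in; have /negbTE -> // : k != a.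
  by apply: contraNneq a_notin_l => <-; exact: mem_take k_in.
rewrite IH //; lia.
Qed.

Lemma grant_at avail l x j : uniq l -> j \in l ->
  grant avail l x j = minn (x j) (avail - \sum_(k <- take (index j l) l) x k).
Proof.
elim: l avail => [|a l IH] avail //= /andP[_ uniq_l].
rewrite in_cons; case: (eqVneq j a) => [->|ja] /=; first by rewrite big_nil subn0.
move=> j_in; rewrite big_cons IH //; lia.
Qed.

End GreedyGrant.

Lemma take_index_sorted (T : eqType) (e : rel T) (l : seq T) j :
  transitive e -> antisymmetric e -> sorted e l -> uniq l -> j \in l ->
  take (index j l) l = [seq k <- l | e k j && (k != j)].
Proof.
move=> e_tr e_anti; elim: l => [|a l IH] //= sorted_al /andP[a_notin_l uniq_l].
have a_min := order_path_min e_tr sorted_al.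
rewrite in_cons; case: (eqVneq j a) => [-> _|ja j_in] /=.
  rewrite andbF -(filter_pred0 l); apply: eq_in_filter => k k_in /=.
  apply/esym/negbTE/negP => /andP[eka _].
  have eak : e a k by move/allP: a_min => /(_ k k_in).
  by move: a_notin_l; rewrite (e_anti a k (introT andP (conj eak eka))) k_in.
by rewrite andbT IH ?(path_sorted sorted_al) // (allP a_min j j_in).
Qed.

Section HighestRatioOrder.
Variable R : realFieldType.
Variable n : nat.
Local Open Scope ring_scope.
Implicit Types (s : profile R n) (M : nat).

Lemma prec_total s : total (prec s).
Proof.
move=> a b; rewrite /prec.
by case: (ltgtP (Defs.ratio (s b)) (Defs.ratio (s a))) => //= _; exact: leq_total.
Qed.

Lemma prec_trans s : transitive (prec s).
Proof.
move=> b a c; rewrite /prec.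
case/orP=> [h1|/andP[/eqP h1 h1']]; case/orP=> [h2|/andP[/eqP h2 h2']].
- by rewrite (lt_trans h2 h1).
- by rewrite -h2 h1.
- by rewrite h1 h2.
- by rewrite h1 h2 eqxx (leq_trans h1') ?orbT.
Qed.

Lemma prec_anti s : antisymmetric (prec s).
Proof.
move=> a b /andP[]; rewrite /prec.
case/orP=> [h1|/andP[/eqP h1 h1']]; case/orP=> [h2|/andP[/eqP h2 h2']].
- by move: (lt_trans h1 h2); rewrite ltxx.
- by move: h1; rewrite h2 ltxx.
- by move: h2; rewrite h1 ltxx.
- by apply/val_inj/eqP; rewrite eqn_leq h1' h2'.
Qed.

Definition before s (k j : 'I_n) : bool := prec s k j && (k != j).

Definition req s (k : 'I_n) : nat := (s k).1.

Lemma hrg_perm s : perm_eq (hrg_order s) (index_enum 'I_n).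
Proof.
rewrite /hrg_order perm_sort; apply: uniq_perm; rewrite ?enum_uniq ?index_enum_uniq //.
by move=> x; rewrite mem_enum mem_index_enum.
Qed.

Lemma hrg_uniq s : uniq (hrg_order s).
Proof. by rewrite /hrg_order sort_uniq enum_uniq. Qed.

Lemma sum_served_before s j (f : 'I_n -> nat) :
  (\sum_(k <- take (index j (hrg_order s)) (hrg_order s)) f k =
   \sum_(k | before s k j) f k)%N.
Proof.
rewrite (take_index_sorted (@prec_trans s) (@prec_anti s)) ?hrg_uniq //.
- by rewrite big_filter (perm_big _ (hrg_perm s)).
- exact: (sort_sorted (@prec_total s)).
- by rewrite /hrg_order mem_sort mem_enum.
Qed.

Lemma alloc_at M s j :
  alloc M s j = minn (req s j) (M - \sum_(k | before s k j) req s k).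
Proof.
by rewrite /alloc grant_at ?hrg_uniq ?sum_served_before // /hrg_order mem_sort mem_enum.
Qed.

Lemma alloc_sum_before M s j :
  (\sum_(k | before s k j) alloc M s k = minn M (\sum_(k | before s k j) req s k))%N.
Proof. by rewrite -!sum_served_before; exact: grant_prefix_sum (hrg_uniq s). Qed.

Lemma alloc_total M s : (\sum_k alloc M s k <= M)%N.
Proof.
rewrite -(perm_big _ (hrg_perm s)) /= -{1}(take_size (hrg_order s)).
by rewrite /alloc grant_prefix_sum ?hrg_uniq // geq_minl.
Qed.

Lemma alloc_le_req M s j : (alloc M s j <= req s j)%N.
Proof. by rewrite alloc_at geq_minl. Qed.

Lemma alloc_before_le_total M s j :
  (alloc M s j + \sum_(k | before s k j) alloc M s k <= \sum_k alloc M s k)%N.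
Proof.
rewrite [X in (_ <= X)%N](bigD1 j) //= leq_add2l.
by apply: sum_subpred_le => k /andP[].
Qed.

Lemma alloc_unsaturated M s : (\sum_k alloc M s k < M)%N ->
  forall j, alloc M s j = req s j.
Proof.
move=> left_over j; apply/eqP; rewrite eqn_leq alloc_le_req /= leqNgt; apply/negP => short.
have := alloc_at M s j; have := alloc_sum_before M s j.
have := alloc_before_le_total M s j; lia.
Qed.

Lemma alloc_before_served M s j : (\sum_(k | before s k j) req s k <= M)%N ->
  forall k, before s k j -> alloc M s k = req s k.
Proof.
move=> fits.
have sum_eq : (\sum_(k | before s k j) alloc M s k = \sum_(k | before s k j) req s k)%N.
  by rewrite alloc_sum_before; apply/minn_idPr.
have [_] := leqif_sum (P := before s ^~ j) (fun i _ => leqif_eq (alloc_le_req M s i)).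
by rewrite sum_eq eqxx => /esym/forall_inP served k kj; apply/eqP/served.
Qed.

End HighestRatioOrder.

Section Concave.
Variable R : realFieldType.
Local Open Scope ring_scope.
Variable f : nat -> R.
Hypothesis f0 : f 0%N = 0.
Hypothesis f_concave : forall x, f x.+2 - f x.+1 <= f x.+1 - f x.

Lemma marginal_antitone a b : (a <= b)%N -> f b.+1 - f b <= f a.+1 - f a.
Proof.
elim: b => [|b IH]; first by rewrite leqn0 => /eqP ->.
rewrite leq_eqVlt => /orP[/eqP -> //|]; rewrite ltnS => ab.
exact: le_trans (f_concave b) (IH ab).
Qed.

Lemma concave_le_linear x : f x <= x%:R * f 1%N.
Proof.
elim: x => [|x IH]; first by rewrite f0 mul0r.
have := marginal_antitone (leq0n x); rewrite f0 subr0 -natr1 mulrDl mul1r; lra.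
Qed.

Lemma scaled_marginal_le x : x%:R * (f x.+1 - f x) <= f x.
Proof.
elim: x => [|x IH]; first by rewrite f0 mul0r.
have : x%:R * (f x.+2 - f x.+1) <= x%:R * (f x.+1 - f x).
  by apply: ler_wpM2l; [exact: ler0n | exact: f_concave].
have := f_concave x; rewrite -natr1 mulrDl mul1r; lra.
Qed.

Lemma average_antitone X x : (0 < X)%N -> (X <= x)%N -> f x / x%:R <= f X / X%:R.
Proof.
move=> X_gt0; elim: x => [|x IH]; first by rewrite leqn0 => /eqP X0; rewrite X0 in X_gt0.
rewrite leq_eqVlt => /orP[/eqP -> //|]; rewrite ltnS => Xx.
apply: le_trans (IH Xx).
have x_gt0 : (0 < x)%N := leq_trans X_gt0 Xx.
rewrite ler_pdivrMr ?ltr0n // mulrAC ler_pdivlMr ?ltr0n //.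
have := scaled_marginal_le x; rewrite -natr1; nra.
Qed.

Lemma marginal_le_average x : f x.+1 - f x <= f x.+1 / x.+1%:R.
Proof.
rewrite ler_pdivlMr ?ltr0n //.
have := scaled_marginal_le x; rewrite -natr1; nra.
Qed.

End Concave.

Lemma nondecreasing_ge0 (R : realFieldType) (f : nat -> R) :
  f 0%N = 0%R -> (forall x, f x <= f x.+1)%R -> forall x, (0 <= f x)%R.
Proof. by move=> f0 f_mono; elim=> [|x IH]; [rewrite f0 | exact: le_trans IH (f_mono x)]. Qed.

Lemma upd_at (R : realFieldType) n (s : profile R n) i r : upd s i r i = r.
Proof. by rewrite /upd eqxx. Qed.

Lemma upd_other (R : realFieldType) n (s : profile R n) i r k :
  k != i -> upd s i r k = s k.
Proof. by rewrite /upd => /negbTE ->. Qed.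

Section OneRound.
Variable R : realFieldType.
Local Open Scope ring_scope.
Variables (n M : nat) (w : 'I_n -> nat -> R) (s : profile R n).
Hypothesis w0 : forall i, w i 0%N = 0.
Hypothesis w_mono : forall i x, w i x <= w i x.+1.
Hypothesis w_concave : forall i x, w i x.+2 - w i x.+1 <= w i x.+1 - w i x.

Local Notation X := (alloc M s).

Lemma sw_le_items_Delta : \sum_i w i (X i) <= M%:R * \big[Num.max/0]_(i < n) w i 1%N.
Proof.
set D := \big[Num.max/0]_(i < n) w i 1%N.
apply: (@le_trans _ _ (\sum_i (X i)%:R * D)).
  apply: ler_sum => i _; apply: le_trans (concave_le_linear (w0 i) (w_concave i) _) _.
  by apply: ler_wpM2l; [exact: ler0n | exact: le_bigmax].
rewrite -mulr_suml -natr_sum; apply: ler_wpM2r; first exact: bigmax_ge_id.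
by rewrite ler_nat alloc_total.
Qed.

Hypothesis hN : nash M w s.

(* A valid request for one more item that is not crowded out by the players
   served before it would obtain X i + 1 items, so it cannot be profitable. *)
Lemma extra_item_unprofitable i r : valid_req M (w i) r -> r.1 = (X i).+1 ->
  (\sum_(k | before (upd s i r) k i) req s k <= M - (X i).+1)%N ->
  w i (X i).+1 <= w i (X i).
Proof.
move=> r_valid r1 demand_fits.
have r1_le_M : ((X i).+1 <= M)%N by case/and3P: r_valid; rewrite r1.
have := hN.2 i r r_valid; rewrite alloc_at {1}/req upd_at r1.
rewrite (@eq_bigr _ _ _ _ _ _ _ (req s)); last by move=> k /andP[_ ki]; rewrite /req upd_other.
have fits : ((X i).+1 <= M - \sum_(k | before (upd s i r) k i) req s k)%N by lia.
by rewrite (minn_idPl fits).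
Qed.

Section PositiveMarginal.
Variable i : 'I_n.
Hypothesis gain_pos : w i (X i) < w i (X i).+1.

Let no_gain : ~~ (w i (X i).+1 <= w i (X i)).
Proof. by rewrite -ltNge. Qed.

(* All items are handed out: otherwise everyone is fully served and i could
   claim one more item at value 0. *)
Lemma nash_saturated : (\sum_k X k = M)%N.
Proof.
apply/eqP; rewrite eqn_leq alloc_total /= leqNgt; apply/negP => short.
have served := alloc_unsaturated short.
apply: (negP no_gain); apply: (@extra_item_unprofitable i ((X i).+1, 0)) => //.
  rewrite /valid_req /= lexx (nondecreasing_ge0 (w0 i) (w_mono i)) !andbT.
  by apply: leq_ltn_trans short; rewrite (bigD1 i) //= leq_addr.
apply: (@leq_trans (\sum_(k | k != i) req s k)); first by apply: sum_subpred_le => k /andP[].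
rewrite (@eq_bigr _ _ _ _ _ _ _ X) => [|k _]; last by rewrite served.
by move: short; rewrite (bigD1 i) //=; lia.
Qed.

(* Every other player j that receives items has ratio at least the average
   value w_i(X_i+1)/(X_i+1): otherwise i could outbid j and take an extra item. *)
Lemma nash_ratio_bound j : j != i -> (0 < X j)%N ->
  w i (X i).+1 / (X i).+1%:R <= Defs.ratio (s j).
Proof.
move=> ji Xj_gt0; rewrite leNgt; apply/negP => outbid.
have split_ij : (X i + X j + \sum_(k | (k != i) && (k != j)) X k = M)%N.
  by rewrite -[RHS]nash_saturated [in RHS](bigD1 i) //= [in RHS](bigD1 j) //= addnA.
have demand_j : (\sum_(k | before s k j) req s k <= M)%N.
  by have := alloc_at M s j; lia.
have served := alloc_before_served demand_j.
apply: (negP no_gain); apply: (@extra_item_unprofitable i ((X i).+1, w i (X i).+1)) => //.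
  by rewrite /valid_req /= lexx (nondecreasing_ge0 (w0 i) (w_mono i)) !andbT; lia.
have outbid_before k : before (upd s i ((X i).+1, w i (X i).+1)) k i ->
    before s k j && (k != i).
  move=> /andP[]; rewrite /prec upd_at => + ki; rewrite upd_other // ki andbT => pk.
  have ratio_k : w i (X i).+1 / (X i).+1%:R <= Defs.ratio (s k).
    by case/orP: pk => [/ltW //|/andP[/eqP -> _]].
  have ljk := lt_le_trans outbid ratio_k.
  by rewrite /before /prec ljk /=; apply: contraTneq ljk => ->; rewrite ltxx.
apply: leq_trans (sum_subpred_le _ outbid_before) _.
rewrite (@eq_bigr _ _ _ _ _ _ _ X); last by move=> k /andP[/served ->].
apply: (@leq_trans (\sum_(k | (k != i) && (k != j)) X k)); last lia.
by apply: sum_subpred_le => k /andP[/andP[_ ->] ->].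
Qed.

(* Each player's items are worth at least i's marginal value per item:
   X_j d <= X_j w_i(X_i+1)/(X_i+1) <= X_j ratio_j <= X_j w_j(req_j)/req_j <= w_j(X_j). *)
Lemma nash_item_value j : (X j)%:R * (w i (X i).+1 - w i (X i)) <= w j (X j).
Proof.
case: (eqVneq j i) => [->|ji]; first exact: scaled_marginal_le (w0 i) (w_concave i) _.
case: (posnP (X j)) => [->|Xj_gt0]; first by rewrite mul0r w0.
have [_ _ claim_le] := and3P (hN.1 j).
have ratio_le_avg : Defs.ratio (s j) <= w j (req s j) / (req s j)%:R.
  by apply: ler_wpM2r => //; rewrite invr_ge0 ler0n.
have := le_trans (marginal_le_average (w0 i) (w_concave i) (X i))
  (le_trans (nash_ratio_bound ji Xj_gt0) (le_trans ratio_le_avg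
    (average_antitone (w0 j) (w_concave j) Xj_gt0 (alloc_le_req M s j)))).
by rewrite ler_pdivlMr ?ltr0n // mulrC.
Qed.

End PositiveMarginal.

Lemma nash_marginal_le_sw i : M%:R * (w i (X i).+1 - w i (X i)) <= \sum_j w j (X j).
Proof.
have sw_ge0 : 0 <= \sum_j w j (X j).
  by apply: sumr_ge0 => j _; exact: nondecreasing_ge0 (w0 j) (w_mono j) _.
case: (leP (w i (X i).+1 - w i (X i)) 0) => [gain_le0|].
  by apply: le_trans sw_ge0; apply: mulr_ge0_le0; [exact: ler0n | exact: gain_le0].
rewrite subr_gt0 => gain_pos.
rewrite -[M in M%:R](nash_saturated gain_pos) natr_sum mulr_suml.
by apply: ler_sum => j _; exact: nash_item_value.
Qed.

End OneRound.

Section MarginalValuations.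
Variable R : realFieldType.
Local Open Scope ring_scope.
Variables (n : nat) (v : 'I_n -> nat -> R) (mb : nat -> nat) (s : nat -> profile R n).
Hypothesis v_mono : forall i x, v i x <= v i x.+1.
Hypothesis v_concave : forall i x, v i x.+2 - v i x.+1 <= v i x.+1 - v i x.

Lemma vt_zero t i : vt v mb s t i 0%N = 0.
Proof. by rewrite /vt add0n subrr. Qed.

Lemma vt_mono t i x : vt v mb s t i x <= vt v mb s t i x.+1.
Proof. by rewrite /vt lerD2r addSn v_mono. Qed.

Lemma vt_concave t i x :
  vt v mb s t i x.+2 - vt v mb s t i x.+1 <= vt v mb s t i x.+1 - vt v mb s t i x.
Proof. by rewrite /vt !addSn; have := v_concave i (x + alpha mb s t.-1 i); lra. Qed.

Lemma vt_next_first t i : (0 < t)%N ->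
  vt v mb s t.+1 i 1%N = vt v mb s t i (alloc (mb t) (s t) i).+1
                         - vt v mb s t i (alloc (mb t) (s t) i).
Proof.
case: t => [//|t] _; rewrite /vt /=.
set a := alpha mb s t i; set x := alloc (mb t.+1) (s t.+1) i.
by rewrite add1n addSn addnC; lra.
Qed.

End MarginalValuations.

Local Open Scope ring_scope.

Theorem lemma1 (R : realFieldType) (n m k : nat)
  (v : 'I_n -> nat -> R)
  (hv0 : forall i, v i 0%N = 0)
  (hvnn : forall i x, 0 <= v i x)
  (hvmono : forall i x, v i x <= v i x.+1)
  (hvconc : forall i x, v i x.+2 - v i x.+1 <= v i x.+1 - v i x)
  (mb : nat -> nat)
  (hmb : forall t, (1 <= t <= k)%N -> (0 < mb t)%N)
  (hsum : (\sum_(1 <= t < k.+1) mb t)%N = m)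
  (s : nat -> profile R n)
  (heq : myopic_eq v k mb s) :
  forall t, (1 <= t <= k)%N ->
    Delta v mb s t >= sw_round v mb s t / (mb t)%:R /\
    sw_round v mb s t / (mb t)%:R >= Delta v mb s t.+1.
Proof.
move=> t t_range; have /andP[t_gt0 _] := t_range.
have mb_pos : 0 < (mb t)%:R :> R by rewrite ltr0n hmb.
have w0 := vt_zero v mb s t; have w_mono := vt_mono mb s hvmono t.
have w_concave := vt_concave mb s hvconc t.
split.
  rewrite ler_pdivrMr // mulrC.
  exact: sw_le_items_Delta w0 w_concave.
apply: bigmax_le => [|i _].
  by apply: divr_ge0; [apply: sumr_ge0 => i _; exact: nondecreasing_ge0 | exact: ler0n].
rewrite ler_pdivlMr // mulrC vt_next_first //.
exact: nash_marginal_le_sw w0 w_mono w_concave (heq t t_range) i.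
Qed.
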